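(* Let $M=p_1^{n_1}\cdots p_K^{n_K}$ with distinct primes and $n_\nu\in\mathbb{N}$, let $A\oplus B=\mathbb{Z}_M$, and fix $i$. Assume $0\in B$, and that $a_0\neq a_1\in A$ satisfy $p_i^{n_i}\mid a_0-a_1$. Assume further that $a_\mu*F_i$ splits with parity $(B,A)$ for $\mu=0,1$. Then $\Sigma_A(a_0*F_i)$ and $\Sigma_A(a_1*F_i)$ are disjoint.
   Context: $A\oplus B=\mathbb{Z}_M$ means every element of $\mathbb{Z}_M$ is uniquely $a+b$ with $a\in A$, $b\in B$. $F_i=\{0,M/p_i,\dots,(p_i-1)M/p_i\}$, $x*F_i=\{x+f:f\in F_i\}$. For $Z\subset\mathbb{Z}_M$, $\Sigma_A(Z)=\{a\in A: a+b\in Z\text{ for some }b\in B\}$, $\Sigma_B(Z)=\{b\in B: a+b\in Z\text{ for some }a\in A\}$. A fiber $Z=x*F_i$ splits with parity $(B,A)$ if $p_i^{n_i}\mid b-b'$ for all $b,b'\in\Sigma_B(Z)$ and, for all distinct $a,a'\in\Sigma_A(Z)$, $p_i^{n_i-1}\mid a-a'$ but $p_i^{n_i}\nmid a-a'$. *)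

(* Z_M is modelled as 'Z_M (ordinals mod M); M >= 2 follows
   from the hypotheses of the theorem. *)
From mathcomp Require Import all_boot all_order all_algebra.
Set Implicit Arguments. Unset Strict Implicit. Unset Printing Implicit Defensive.
Import GRing.Theory.
Local Open Scope ring_scope.

(* d | x for a residue x in Z_M (meaningful when d | M): d divides the
   canonical representative of x in {0,...,M-1}. *)
Definition dvdZ (M d : nat) (x : 'Z_M) : bool := (d %| (x : nat))%N.

Definition direct_sum (M : nat) (A B : {set 'Z_M}) : Prop :=
  forall x : 'Z_M, exists! ab : 'Z_M * 'Z_M,
    [&& ab.1 \in A, ab.2 \in B & ab.1 + ab.2 == x].

Definition fiber (M q : nat) (x : 'Z_M) : {set 'Z_M} :=
  [set x + ((k * (M %/ q))%N%:R : 'Z_M) | k : 'I_q].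

Definition SigmaA (M : nat) (A B Z : {set 'Z_M}) : {set 'Z_M} :=
  [set a in A | [exists b in B, a + b \in Z]].

Definition SigmaB (M : nat) (A B Z : {set 'Z_M}) : {set 'Z_M} :=
  [set b in B | [exists a in A, a + b \in Z]].

Definition splits_BA (M q e : nat) (A B Z : {set 'Z_M}) : Prop :=
  (forall b b', b \in SigmaB A B Z -> b' \in SigmaB A B Z ->
     dvdZ (q ^ e)%N (b - b')) /\
  (forall a a', a \in SigmaA A B Z -> a' \in SigmaA A B Z -> a != a' ->
     dvdZ (q ^ e.-1)%N (a - a') && ~~ dvdZ (q ^ e)%N (a - a')).

(* If a lies in both Sigma_A(a0 * F_i) and Sigma_A(a1 * F_i), write
   a + b = a0 + k M/p_i and a + b' = a1 + k' M/p_i with b, b' in B.  The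
   B-part of the splitting, compared with 0 in Sigma_B(a0 * F_i), gives
   p_i^n_i | b, b'; reducing modulo p_i^n_i and using a0 = a1 there yields
   k M/p_i = k' M/p_i (mod p_i^n_i), hence k = k' because M/p_i is
   p_i^(n_i-1) times a unit mod p_i.  Subtracting the two equations gives
   a0 + b' = a1 + b, contradicting the uniqueness in A (+) B. *)
From mathcomp Require Import all_boot all_order all_algebra.
From mathcomp Require Import zify.
Set Implicit Arguments. Unset Strict Implicit. Unset Printing Implicit Defensive.
Local Open Scope ring_scope.
Import GRing.Theory.

Lemma prime_ndvd_cofactor (K : nat) (p n : 'I_K -> nat) (i : 'I_K) :
  (forall nu, prime (p nu)) -> injective p ->
  ~~ (p i %| \prod_(nu < K | nu != i) p nu ^ n nu)%N.
Proof.
move=> p_pr p_inj; rewrite Euclid_dvd_prod // big1 // => nu nu_i.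
rewrite Euclid_dvdX // dvdn_prime2 // andbC.
by apply/negP => /andP[_ /eqP/p_inj nu_eq]; rewrite nu_eq eqxx in nu_i.
Qed.

Lemma eqn_mod_coprime_mulr (q R k k' : nat) : prime q -> ~~ (q %| R)%N ->
  (k < q)%N -> (k' < q)%N -> (k * R = k' * R %[mod q])%N -> k = k'.
Proof.
move=> q_pr q_ndvd_R.
wlog le_k'k : k k' / (k' <= k)%N.
  move=> W lt_kq lt_k'q eq_mod; case: (leqP k' k) => [le|/ltnW lt].
    exact: W.
  by apply/esym/W.
move=> lt_kq _ /eqP; rewrite eqn_mod_dvd ?leq_mul2r ?le_k'k ?orbT //.
rewrite -mulnBl Gauss_dvdl ?prime_coprime //.
have [k_eq|/dvdn_leq le_q] := posnP (k - k')%N; first lia.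
by move=> /le_q; lia.
Qed.

Lemma eq_pfactor_offsets_mod (q e R : nat) (k k' : 'I_q) : prime q ->
  (0 < e)%N -> ~~ (q %| R)%N ->
  (k * (q ^ e.-1 * R) = k' * (q ^ e.-1 * R) %[mod q ^ e])%N -> k = k'.
Proof.
move=> q_pr e_gt0 q_ndvd_R eq_mod; apply/val_inj.
apply: (eqn_mod_coprime_mulr q_pr q_ndvd_R (ltn_ord k) (ltn_ord k')).
have t_gt0 : (0 < q ^ e.-1)%N by rewrite expn_gt0 prime_gt0.
apply/eqP; rewrite -(eqn_pmul2r t_gt0) !muln_modl -expnS prednK //.
by rewrite -!mulnA ![(R * _)%N]mulnC eq_mod.
Qed.

Section ResiduesModDivisor.

Variables (M d : nat).
Hypotheses (M_gt1 : (1 < M)%N) (d_dvd_M : (d %| M)%N).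

Lemma val_Zp_natr_mod (m : nat) : ((m%:R : 'Z_M) : nat) = m %[mod d].
Proof. by rewrite val_Zp_nat // modn_dvdm. Qed.

Lemma val_ZpD_mod (x y : 'Z_M) : (((x + y)%R : 'Z_M) : nat) = x + y %[mod d].
Proof. by rewrite -{1}[x]natr_Zp -{1}[y]natr_Zp -natrD val_Zp_natr_mod. Qed.

Lemma dvdZ_sub_eq_mod (x y : 'Z_M) : dvdZ d (x - y) -> (x : nat) = y %[mod d].
Proof.
rewrite /dvdZ /dvdn => /eqP dvd_xy.
by rewrite -{1}(subrK y x) val_ZpD_mod -modnDml dvd_xy.
Qed.

Lemma val_ZpD_dvd_mod (x b : 'Z_M) :
  dvdZ d b -> (((x + b)%R : 'Z_M) : nat) = x %[mod d].
Proof.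
rewrite /dvdZ /dvdn => /eqP dvd_b.
by rewrite val_ZpD_mod -modnDmr dvd_b addn0.
Qed.

End ResiduesModDivisor.

Lemma direct_sum_injl (M : nat) (A B : {set 'Z_M}) (a a' b b' : 'Z_M) :
  direct_sum A B -> a \in A -> a' \in A -> b \in B -> b' \in B ->
  a + b = a' + b' -> a = a'.
Proof.
move=> dsAB aA a'A bB b'B eq_sum.
have [[u v] [_ uniq_uv]] := dsAB (a + b).
have [-> _] : (a, b) = (u, v) by apply/esym/uniq_uv; rewrite /= aA bB eqxx.
have [-> //] : (a', b') = (u, v).
by apply/esym/uniq_uv; rewrite /= a'A b'B eq_sum eqxx.
Qed.

Lemma mem_fiber (M q : nat) (x : 'Z_M) (k : 'I_q) :
  x + ((k * (M %/ q))%N%:R : 'Z_M) \in fiber q x.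
Proof. exact: imset_f. Qed.

Lemma fiber_id (M q : nat) (x : 'Z_M) : (0 < q)%N -> x \in fiber q x.
Proof.
by move=> q_gt0; have := mem_fiber x (Ordinal q_gt0); rewrite mul0n addr0.
Qed.

Lemma SigmaA_fiberP (M q : nat) (A B : {set 'Z_M}) (x a : 'Z_M) :
  a \in SigmaA A B (fiber q x) ->
  exists b, exists k : 'I_q,
    b \in SigmaB A B (fiber q x) /\ a + b = x + (k * (M %/ q))%N%:R.
Proof.
rewrite inE => /andP[aA /existsP[b /andP[bB abF]]].
have [k _ ab_eq] := imsetP abF.
exists b, k; split=> //; rewrite inE bB; apply/existsP; exists a.
by rewrite aA abF.
Qed.

Lemma splits_BA_dvd_SigmaB (M q e : nat) (A B : {set 'Z_M}) (x b : 'Z_M) :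
  (0 < q)%N -> x \in A -> 0 \in B -> splits_BA q e A B (fiber q x) ->
  b \in SigmaB A B (fiber q x) -> dvdZ (q ^ e) b.
Proof.
move=> q_gt0 xA B0 [splitB _] bS; rewrite -[b]subr0; apply: splitB => //.
by rewrite inE B0; apply/existsP; exists x; rewrite xA addr0 fiber_id.
Qed.

Section DisjointSigmaA.

Variables (M q e R : nat) (A B : {set 'Z_M}).
Hypotheses (q_pr : prime q) (e_gt0 : (0 < e)%N) (q_ndvd_R : ~~ (q %| R)%N).
Hypotheses (M_eq : M = (q ^ e * R)%N) (dsAB : direct_sum A B) (B0 : 0 \in B).

Lemma M_gt1 : (1 < M)%N.
Proof.
have R_gt0 : (0 < R)%N by case: R q_ndvd_R; rewrite ?dvdn0.
rewrite M_eq (leq_trans _ (leq_pmulr _ R_gt0)) //.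
by rewrite -[X in (X < _)%N](expn0 q) ltn_exp2l ?prime_gt1.
Qed.

Lemma divn_M_q : (M %/ q = q ^ e.-1 * R)%N.
Proof. by rewrite M_eq -(prednK e_gt0) expnS -mulnA mulKn // prime_gt0. Qed.

Lemma pfactor_dvd_M : (q ^ e %| M)%N.
Proof. by rewrite M_eq dvdn_mulr. Qed.

Lemma fiber_decomp_mod (x a b : 'Z_M) (k : 'I_q) :
  x \in A -> splits_BA q e A B (fiber q x) -> b \in SigmaB A B (fiber q x) ->
  a + b = x + (k * (M %/ q))%N%:R ->
  (a : nat) = x + k * (q ^ e.-1 * R) %[mod q ^ e].
Proof.
move=> xA splitx bS ab_eq.
have dvd_b := splits_BA_dvd_SigmaB (prime_gt0 q_pr) xA B0 splitx bS.
rewrite -(val_ZpD_dvd_mod M_gt1 pfactor_dvd_M a dvd_b) ab_eq.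
rewrite (val_ZpD_mod M_gt1 pfactor_dvd_M) -modnDmr.
by rewrite (val_Zp_natr_mod M_gt1 pfactor_dvd_M) modnDmr divn_M_q.
Qed.

Lemma SigmaA_fibers_disjoint (a0 a1 : 'Z_M) :
  a0 \in A -> a1 \in A -> a0 != a1 -> dvdZ (q ^ e) (a0 - a1) ->
  splits_BA q e A B (fiber q a0) -> splits_BA q e A B (fiber q a1) ->
  [disjoint SigmaA A B (fiber q a0) & SigmaA A B (fiber q a1)].
Proof.
move=> a0A a1A a0_neq_a1 dvd_a01 split0 split1.
apply/pred0P => a /=; apply/negP => /andP[aS0 aS1].
have [b [k [bS0 ab_eq]]] := SigmaA_fiberP aS0.
have [b' [k' [b'S1 ab'_eq]]] := SigmaA_fiberP aS1.
have eq_k : k = k'.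
  apply: (eq_pfactor_offsets_mod q_pr e_gt0 q_ndvd_R); apply/eqP.
  rewrite -(eqn_modDl a1) -(modnDml a1).
  rewrite -(dvdZ_sub_eq_mod M_gt1 pfactor_dvd_M dvd_a01) modnDml.
  rewrite -(fiber_decomp_mod a0A split0 bS0 ab_eq).
  by rewrite -(fiber_decomp_mod a1A split1 b'S1 ab'_eq).
move: bS0 b'S1; rewrite !inE => /andP[bB _] /andP[b'B _].
apply/negP: a0_neq_a1; rewrite negbK; apply/eqP.
apply: (direct_sum_injl dsAB a0A a1A b'B bB).
apply: (@addIr _ (k * (M %/ q))%N%:R).
by rewrite addrAC -ab_eq [RHS]addrAC eq_k -ab'_eq addrAC.
Qed.

End DisjointSigmaA.

Theorem lemma4p7 (K : nat) (p n : 'I_K -> nat) (M : nat) (i : 'I_K)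
    (A B : {set 'Z_M}) (a0 a1 : 'Z_M) :
  (forall nu, prime (p nu)) -> injective p -> (forall nu, (0 < n nu)%N) ->
  M = (\prod_(nu < K) p nu ^ n nu)%N ->
  direct_sum A B -> 0 \in B ->
  a0 \in A -> a1 \in A -> a0 != a1 -> dvdZ (p i ^ n i)%N (a0 - a1) ->
  splits_BA (p i) (n i) A B (fiber (p i) a0) ->
  splits_BA (p i) (n i) A B (fiber (p i) a1) ->
  [disjoint SigmaA A B (fiber (p i) a0) & SigmaA A B (fiber (p i) a1)].
Proof.
move=> p_pr p_inj n_gt0 M_eq dsAB B0.
apply: (SigmaA_fibers_disjoint (p_pr i) (n_gt0 i)
          (prime_ndvd_cofactor n i p_pr p_inj) _ dsAB B0).
by rewrite M_eq (bigD1 i).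
Qed.
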